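(* Let $x_0 \in \mathcal{X}_n \subset \mathbb{R}^2$ and assume $\phi\in C^\infty(\mathbb{R}^2)$ is quasiconcave with $|\nabla\phi(x_0)|>0$. Suppose $V_h(x_0)$ satisfies: (i) if $p\in V_h(x_0)$ then $-p\in V_h(x_0)$; and (ii) if $p\in V_h(x_0)$ then there exists $q\in V_h(x_0)$ with $p\cdot q = 0$. Then $P_h^-[\phi](x_0)$ is nonempty.
   Context: $\mathcal{X}_n=\{x_1,\dots,x_n\}\subset\mathbb{R}^2$ is a finite point cloud; each $x\in\mathcal{X}_n$ has a neighbor set $N_h(x)\subset\mathcal{X}_n\setminus\{x\}$, and $V_h(x):=\{y-x : y\in N_h(x)\}$. For a function $u$ defined on $\mathcal{X}_n$ (or on a superset) and $x\in\mathcal{X}_n$, \[ P_h^-[u](x) := \{p\in\mathbb{R}^2 : -p\in V_h(x), \text{ and for all } y\in N_h(x),\ p\cdot(y-x)<0 \implies u(y)\le u(x)\}. \] A function $\phi$ is quasiconcave if $\phi(\lambda x + (1-\lambda)y)\ge\min(\phi(x),\phi(y))$ for all $x,y$ and $0<\lambda<1$. *)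

From Stdlib Require Import Reals List.
From Coquelicot Require Import Coquelicot.
Open Scope R_scope.

Definition pt := (R * R)%type.
Definition psub (y x : pt) : pt := (fst y - fst x, snd y - snd x).
Definition popp (p : pt) : pt := (- fst p, - snd p).
Definition dot (p q : pt) : R := fst p * fst q + snd p * snd q.
Definition pcomb (l : R) (x y : pt) : pt :=
  (l * fst x + (1 - l) * fst y, l * snd x + (1 - l) * snd y).

Definition dx (f : pt -> R) (z : pt) : R := Derive (fun t => f (t, snd z)) (fst z).
Definition dy (f : pt -> R) (z : pt) : R := Derive (fun t => f (fst z, t)) (snd z).

Fixpoint Ck (k : nat) (f : pt -> R) : Prop :=
  match k with
  | O => forall z : pt, continuous f z
  | S k' => (forall z : pt, continuous f z)
            /\ (forall z : pt, ex_derive (fun t => f (t, snd z)) (fst z)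
                               /\ ex_derive (fun t => f (fst z, t)) (snd z))
            /\ Ck k' (dx f) /\ Ck k' (dy f)
  end.

Definition smooth (f : pt -> R) : Prop := forall k, Ck k f.

Definition grad_norm (f : pt -> R) (z : pt) : R :=
  sqrt (dx f z ^ 2 + dy f z ^ 2).

Definition quasiconcave (f : pt -> R) : Prop :=
  forall (x y : pt) (l : R), 0 < l < 1 -> f (pcomb l x y) >= Rmin (f x) (f y).

Definition Vh (N : pt -> pt -> Prop) (x : pt) (v : pt) : Prop :=
  exists y, N x y /\ v = psub y x.

Definition Ph_minus (N : pt -> pt -> Prop) (u : pt -> R) (x : pt) (p : pt) : Prop :=
  Vh N x (popp p) /\
  (forall y, N x y -> dot p (psub y x) < 0 -> u y <= u x).

(* Quasiconcavity makes the directions v with phi(x0 + v) > phi(x0) a convex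
   set avoiding 0.  Finitely many points of such a set lie in a closed
   half-plane bounded by the line through one of them, u (otherwise three of
   them would surround 0).  Take q in V_h(x0) orthogonal to u and, using (i),
   orient it so that u x q >= 0: then q.v < 0 forces u x v < 0, so no
   neighbour in such a direction lies above phi(x0), and -q is in V_h(x0). *)
From Stdlib Require Import Reals List Lra Psatz Classical.
From Coquelicot Require Import Coquelicot.
Open Scope R_scope.

Definition cross (a b : pt) : R := fst a * snd b - snd a * fst b.

Definition padd (x v : pt) : pt := (fst x + fst v, snd x + snd v).

Definition wavg (a b : R) (u v : pt) : pt :=
  ((a * fst u + b * fst v) / (a + b), (a * snd u + b * snd v) / (a + b)).

Definition convex (S : pt -> Prop) : Prop :=
  forall a b l, 0 < l < 1 -> S a -> S b -> S (pcomb l a b).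

Lemma popp_involutive (p : pt) : popp (popp p) = p.
Proof. destruct p; unfold popp; simpl; f_equal; ring. Qed.

Lemma padd_psub (x y : pt) : padd x (psub y x) = y.
Proof. destruct x, y; unfold padd, psub; simpl; f_equal; ring. Qed.

Lemma padd_origin (x : pt) : padd x (0, 0) = x.
Proof. destruct x; unfold padd; simpl; f_equal; ring. Qed.

Lemma padd_pcomb (x a b : pt) (l : R) :
  padd x (pcomb l a b) = pcomb l (padd x a) (padd x b).
Proof. unfold padd, pcomb; simpl; f_equal; ring. Qed.

Lemma quasiconcave_superlevel_convex (f : pt -> R) (c : R) :
  quasiconcave f -> convex (fun y => f y > c).
Proof.
  intros Hqc a b l Hl Ha Hb.
  specialize (Hqc a b l Hl); unfold Rmin in Hqc.
  destruct (Rle_dec (f a) (f b)); lra.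
Qed.

Lemma convex_translate (S : pt -> Prop) (x : pt) :
  convex S -> convex (fun v => S (padd x v)).
Proof. intros HS a b l Hl Ha Hb; rewrite padd_pcomb; apply HS; assumption. Qed.

Lemma convex_wavg (S : pt -> Prop) (a b : R) (u v : pt) :
  convex S -> 0 < a -> 0 <= b -> S u -> S v -> S (wavg a b u v).
Proof.
  intros HS Ha Hb Su Sv.
  destruct (Req_dec b 0) as [->|Hb0].
  - replace (wavg a 0 u v) with u; [exact Su|].
    destruct u; unfold wavg; simpl; f_equal; field; lra.
  - replace (wavg a b u v) with (pcomb (a / (a + b)) u v).
    + apply HS; [split|exact Su|exact Sv].
      * apply Rdiv_lt_0_compat; lra.
      * apply Rmult_lt_reg_r with (a + b); [lra|].
        field_simplify; lra.
    + unfold wavg, pcomb; f_equal; field; lra.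
Qed.

(* Rests on the identity  [cross v w] u + [cross w u] v + [cross u v] w = 0. *)
Lemma cross_weights_sum_zero (u v w : pt) :
  0 <= cross u v -> 0 < cross v w -> 0 < cross w u ->
  wavg (cross v w + cross w u) (cross u v) (wavg (cross v w) (cross w u) u v) w
  = (0, 0).
Proof.
  destruct u as [x1 y1], v as [x2 y2], w as [x3 y3]; unfold cross; simpl.
  intros; unfold wavg; simpl; f_equal; field; lra.
Qed.

Lemma convex_no_cross_cycle (S : pt -> Prop) (u v w : pt) :
  convex S -> ~ S (0, 0) -> S u -> S v -> S w ->
  cross u v >= 0 -> cross v w > 0 -> cross w u > 0 -> False.
Proof.
  intros HS H0 Su Sv Sw Huv Hvw Hwu.
  apply H0; rewrite <- (cross_weights_sum_zero u v w) by lra.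
  apply convex_wavg; [exact HS|lra|lra| |exact Sw].
  apply convex_wavg; [exact HS|lra|lra|exact Su|exact Sv].
Qed.

Lemma convex_extreme_point (S : pt -> Prop) (l : list pt) :
  convex S -> ~ S (0, 0) -> (forall v, In v l -> S v) -> l <> nil ->
  exists u, In u l /\ forall v, In v l -> cross u v >= 0.
Proof.
  intros HS H0; induction l as [|a l IH]; intros Hl Hne; [congruence|].
  destruct l as [|b l].
  - exists a; split; [now left|].
    intros v [<-|[]]; unfold cross; lra.
  - destruct IH as [u [Hu Hext]]; [intros v Hv; apply Hl; now right|discriminate|].
    destruct (Rle_or_lt 0 (cross u a)) as [Hua|Hua].
    + exists u; split; [now right|].
      intros v [<-|Hv]; [lra|now apply Hext].
    + exists a; split; [now left|].
      intros v [<-|Hv]; [unfold cross; lra|].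
      destruct (Rle_or_lt 0 (cross a v)) as [|Hav]; [lra|exfalso].
      apply (convex_no_cross_cycle S u v a HS H0).
      * apply Hl; now right.
      * apply Hl; now right.
      * apply Hl; now left.
      * now apply Hext.
      * unfold cross in *; lra.
      * unfold cross in *; lra.
Qed.

Lemma list_restrict {A : Type} (P : A -> Prop) (X : list A) :
  exists L, forall y, In y L <-> In y X /\ P y.
Proof.
  induction X as [|a X [L HL]].
  - exists nil; simpl; tauto.
  - destruct (classic (P a)) as [Pa|nPa].
    + exists (a :: L); intros y; simpl; rewrite HL.
      split; [intros [<-|?]|intros [[<-|?] ?]]; tauto.
    + exists L; intros y; simpl; rewrite HL.
      split; [tauto|intros [[<-|?] ?]; tauto].
Qed.

Lemma dot_orth_cross (u q v : pt) :
  dot u q = 0 -> dot u u * dot q v = cross u q * cross u v.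
Proof.
  intros Huq.
  transitivity (dot u q * dot u v + cross u q * cross u v);
    [unfold dot, cross; ring|rewrite Huq; ring].
Qed.

Lemma orth_halfplane (u q : pt) :
  u <> (0, 0) -> dot u q = 0 ->
  exists p, (p = q \/ p = popp q) /\ forall v, dot p v < 0 -> cross u v < 0.
Proof.
  intros Hu Huq.
  assert (Huu : dot u u > 0).
  { destruct u as [a b]; unfold dot; simpl.
    destruct (Req_dec a 0) as [->|]; [destruct (Req_dec b 0) as [->|]|];
      [contradiction|nra|nra]. }
  destruct (Rle_or_lt 0 (cross u q)) as [Hq|Hq].
  - exists q; split; [now left|].
    intros v Hv; pose proof (dot_orth_cross u q v Huq); nra.
  - exists (popp q); split; [now right|].
    intros v Hv; pose proof (dot_orth_cross u q v Huq).
    assert (dot (popp q) v = - dot q v) by (unfold dot, popp; simpl; ring).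
    nra.
Qed.

Theorem theorem2
  (X : list pt) (N : pt -> pt -> Prop)
  (HN : forall x y, In x X -> N x y -> In y X /\ y <> x)
  (x0 : pt) (Hx0 : In x0 X)
  (HNne : exists y, N x0 y)
  (phi : pt -> R) (Hsmooth : smooth phi) (Hqc : quasiconcave phi)
  (Hgrad : grad_norm phi x0 > 0)
  (Hsym : forall p, Vh N x0 p -> Vh N x0 (popp p))
  (Horth : forall p, Vh N x0 p -> exists q, Vh N x0 q /\ dot p q = 0) :
  exists p, Ph_minus N phi x0 p.
Proof.
  destruct (classic (exists y, N x0 y /\ phi y > phi x0)) as [[y [Ny Hy]]|Hnone].
  2:{ destruct HNne as [y Ny]; exists (popp (psub y x0)); split.
      - rewrite popp_involutive; now exists y.
      - intros z Nz _; apply Rnot_gt_le; intros Hz; apply Hnone; eauto. }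
  set (S := fun v => phi (padd x0 v) > phi x0).
  assert (HS : convex S)
    by exact (convex_translate _ x0 (quasiconcave_superlevel_convex phi (phi x0) Hqc)).
  assert (H0 : ~ S (0, 0)) by (unfold S; rewrite padd_origin; lra).
  destruct (list_restrict (fun z => N x0 z /\ phi z > phi x0) X) as [L HL].
  set (D := map (fun z => psub z x0) L).
  assert (HD : forall z, N x0 z -> phi z > phi x0 -> In (psub z x0) D).
  { intros z Nz Hz; apply (in_map (fun z => psub z x0)), HL.
    split; [apply (HN x0 z Hx0 Nz)|auto]. }
  assert (HDS : forall v, In v D -> S v).
  { intros v [z [<- Hz%HL]]%in_map_iff; unfold S; rewrite padd_psub; tauto. }
  destruct (convex_extreme_point S D HS H0 HDS) as [u [Hu Hext]].
  { pose proof (HD y Ny Hy) as Hin; intros Hnil; rewrite Hnil in Hin; exact Hin. }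
  destruct (Horth u) as [q [Vq Hq]].
  { apply in_map_iff in Hu as [y1 [<- Hy1%HL]]; exists y1; tauto. }
  destruct (orth_halfplane u q) as [p [Hpq Hp]]; auto.
  { intros ->; apply H0, HDS, Hu. }
  exists p; split.
  - destruct Hpq as [->| ->]; [now apply Hsym|now rewrite popp_involutive].
  - intros z Nz Hdz; apply Rnot_gt_le; intros Hz.
    specialize (Hext _ (HD z Nz Hz)); specialize (Hp _ Hdz); lra.
Qed.
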